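(* Let $(\mathcal{L},\mathcal{O})$ be a linear encoding of a maximization problem, fix a dimension $d$, and let $P, Q \subseteq \mathbb{R}^d$ be the associated pair, where $P = \mathrm{conv}\{x \in \{0,1\}^d \mid x \in \mathcal{L}\}$ and $Q = \{x \in \mathbb{R}^d \mid w^\intercal x \leqslant \max\{w^\intercal z \mid z \in P\}\ \forall w \in \mathcal{O}\cap \mathbb{R}^d\}$; assume $Q$ is a polyhedron, given by a finite system $Ax \leqslant b$. Let $\rho \geqslant 1$, and let $S^{P,\rho Q}$ be the slack matrix of the pair $P, \rho Q$ with respect to a finite inner description of $P$ and the outer description $\rho Q = \{x \mid Ax \leqslant \rho b\}$. Then the minimum size of a $\rho$-approximate EF of the problem (with respect to this linear encoding) equals $\operatorname{rank}_+(S^{P,\rho Q}) + c$ for some $c \in \{0,-1\}$ (i.e. it lies between $\operatorname{rank}_+(S^{P,\rho Q})-1$ and $\operatorname{rank}_+(S^{P,\rho Q})$). Analogously, for a minimization problem, with $Q = \{x \mid w^\intercal x \geqslant \min\{w^\intercal z \mid z\in P\}\ \forall w \in \mathcal{O}\cap\mathbb{R}^d\}$ polyhedral, the minimum size of a $\rho$-approximate EF is $\operatorname{rank}_+(S^{P,\rho^{-1}Q})$ or $\operatorname{rank}_+(S^{P,\rho^{-1}Q})-1$.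
   Context: A linear encoding of a problem is a pair $(\mathcal{L},\mathcal{O})$ with $\mathcal{L} \subseteq \{0,1\}^*$ (feasible solutions) and $\mathcal{O}\subseteq \mathbb{R}^*$ (admissible objective functions). For a maximization problem, a $\rho$-approximate extended formulation (EF) is a system $Ex + Fy = g$, $y \geqslant \mathbf{0}$, $(x,y)\in\mathbb{R}^{d+r}$, whose projection $K = \{x \mid \exists y: Ex+Fy=g, y \geqslant \mathbf 0\}$ satisfies $\max_{x\in K} w^\intercal x \geqslant \max_{x \in P} w^\intercal x$ for all $w \in \mathbb{R}^d$ and $\max_{x\in K} w^\intercal x \leqslant \rho\max_{x \in P} w^\intercal x$ for all $w \in \mathcal{O}\cap\mathbb{R}^d$; equivalently $P \subseteq K \subseteq \rho Q$. For minimization, the conditions are $\min_K w^\intercal x \leqslant \min_P w^\intercal x$ for all $w$ and $\min_K w^\intercal x \geqslant \rho^{-1}\min_P w^\intercal x$ for $w \in \mathcal{O}\cap\mathbb{R}^d$; equivalently $P \subseteq K \subseteq \rho^{-1}Q$. The size of the EF is $r$. For polyhedra $P = \mathrm{conv}\{v_1,\dots,v_n\}+\mathrm{cone}\{r_1,\dots,r_k\}$ and $Q' = \{x \mid A_ix \leqslant b_i, i \in [m]\}$ with $P\subseteq Q'$, the slack matrix $S^{P,Q'}$ is the $m\times(n+k)$ matrix with entries $b_i - A_iv_j$ (vertex columns) and $-A_ir_j$ (ray columns); a system of the form $Ax \geqslant b$ is rewritten as $-Ax \leqslant -b$. $\operatorname{rank}_+(M)$ is the nonnegative rank: the minimum $r$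 with $M = TU$, $T,U\geqslant 0$ of inner dimension $r$ ($0$ for the zero matrix). *)

From HB Require Import structures.
From mathcomp Require Import all_boot all_order all_algebra.
From mathcomp Require Import reals.
Set Implicit Arguments. Unset Strict Implicit. Unset Printing Implicit Defensive.
Import Order.TTheory GRing.Theory Num.Theory.
Local Open Scope ring_scope.

Section Defs.
Variables (R : realType) (d : nat).

Definition dot (w x : 'cV[R]_d) : R := \sum_(i < d) w i 0 * x i 0.

Definition conv_set (S : 'cV[R]_d -> Prop) (x : 'cV[R]_d) : Prop :=
  exists (n : nat) (v : 'I_n -> 'cV[R]_d) (l : 'I_n -> R),
    [/\ forall i, S (v i), forall i, 0 <= l i, \sum_(i < n) l i = 1
      & x = \sum_(i < n) l i *: v i].

Definition conv_pts (n : nat) (V : 'I_n -> 'cV[R]_d) : 'cV[R]_d -> Prop :=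
  conv_set (fun y => exists j, y = V j).

(* x in {0,1}^d is a feasible solution: it is the 0/1 vector of a bit
   string of length d lying in L *)
Definition feasible (L : seq bool -> Prop) (x : 'cV[R]_d) : Prop :=
  exists s : seq bool, [/\ size s = d, L s
    & forall i : 'I_d, x i 0 = (nth false s i)%:R].

Definition Pset (L : seq bool -> Prop) : 'cV[R]_d -> Prop :=
  conv_set (feasible L).

Definition inO (O : seq R -> Prop) (w : 'cV[R]_d) : Prop :=
  O [seq w i 0 | i <- enum 'I_d].

(* Q for maximization: w^T x <= max_{z in P} w^T z for all w in O /\ R^d
   (P is a polytope, so the max is attained when P is nonempty;
    max over the empty set is -oo) *)
Definition Qmax (L : seq bool -> Prop) (O : seq R -> Prop) (x : 'cV[R]_d) :=
  forall w, inO O w -> exists z, Pset L z /\ dot w x <= dot w z.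

Definition Qmin (L : seq bool -> Prop) (O : seq R -> Prop) (x : 'cV[R]_d) :=
  forall w, inO O w -> exists z, Pset L z /\ dot w z <= dot w x.

Definition polyhedron (m : nat) (A : 'M[R]_(m, d)) (b : 'cV[R]_m)
  (x : 'cV[R]_d) : Prop := forall i, (A *m x) i 0 <= b i 0.

Definition slack (m n : nat) (A : 'M[R]_(m, d)) (b : 'cV[R]_m)
  (V : 'I_n -> 'cV[R]_d) : 'M[R]_(m, n) :=
  \matrix_(i < m, j < n) (b i 0 - (A *m V j) i 0).

Definition EFproj (k r : nat) (E : 'M[R]_(k, d)) (F : 'M[R]_(k, r))
  (g : 'cV[R]_k) (x : 'cV[R]_d) : Prop :=
  exists y : 'cV[R]_r, (forall i, 0 <= y i 0) /\ E *m x + F *m y = g.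

(* rho-approximate EF for a maximization problem:
   max_K w^T x >= max_P w^T x for all w, and
   max_K w^T x <= rho * max_P w^T x for all w in O /\ R^d *)
Definition approxEF_max (L : seq bool -> Prop) (O : seq R -> Prop) (rho : R)
  (k r : nat) (E : 'M[R]_(k, d)) (F : 'M[R]_(k, r)) (g : 'cV[R]_k) : Prop :=
  (forall w z, Pset L z -> exists x, EFproj E F g x /\ dot w z <= dot w x) /\
  (forall w, inO O w -> forall x, EFproj E F g x ->
     exists z, Pset L z /\ dot w x <= rho * dot w z).

(* rho-approximate EF for a minimization problem:
   min_K w^T x <= min_P w^T x for all w, and
   min_K w^T x >= rho^-1 * min_P w^T x for all w in O /\ R^d *)
Definition approxEF_min (L : seq bool -> Prop) (O : seq R -> Prop) (rho : R)
  (k r : nat) (E : 'M[R]_(k, d)) (F : 'M[R]_(k, r)) (g : 'cV[R]_k) : Prop :=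
  (forall w z, Pset L z -> exists x, EFproj E F g x /\ dot w x <= dot w z) /\
  (forall w, inO O w -> forall x, EFproj E F g x ->
     exists z, Pset L z /\ rho^-1 * dot w z <= dot w x).

Definition min_EF_size_max (L : seq bool -> Prop) (O : seq R -> Prop) (rho : R)
  (r : nat) : Prop :=
  (exists k (E : 'M[R]_(k, d)) (F : 'M[R]_(k, r)) g, approxEF_max L O rho E F g) /\
  (forall k r' (E : 'M[R]_(k, d)) (F : 'M[R]_(k, r')) g,
     approxEF_max L O rho E F g -> (r <= r')%N).

Definition min_EF_size_min (L : seq bool -> Prop) (O : seq R -> Prop) (rho : R)
  (r : nat) : Prop :=
  (exists k (E : 'M[R]_(k, d)) (F : 'M[R]_(k, r)) g, approxEF_min L O rho E F g) /\
  (forall k r' (E : 'M[R]_(k, d)) (F : 'M[R]_(k, r')) g,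
     approxEF_min L O rho E F g -> (r <= r')%N).

End Defs.

Definition nn_factor (R : realType) (m n : nat) (M : 'M[R]_(m, n)) (r : nat) : Prop :=
  exists (T : 'M[R]_(m, r)) (U : 'M[R]_(r, n)),
    [/\ forall i j, 0 <= T i j, forall i j, 0 <= U i j & M = T *m U].

Definition is_nnrank (R : realType) (m n : nat) (M : 'M[R]_(m, n)) (r : nat) : Prop :=
  nn_factor M r /\ forall r', nn_factor M r' -> (r <= r')%N.

(* A rho-approximate EF is the same as an EF whose projection K satisfies
   P <= K <= Q', where Q' = {x | A x <= b'} is rho Q (resp. rho^-1 Q): the
   inclusion P <= K follows from the first approximation condition because a
   point not in K is strictly separated from it by Farkas' lemma.
   If S = T U is a nonnegative factorization of the slack matrix S of (P, Q'),
   then A x + T y = b', y >= 0 is such an EF of size rank_+(S): the vertex v_j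
   lifts to y = U_j, and T y >= 0 gives A x <= b'.
   Conversely, given an EF E x + F y = g, y >= 0 with P <= K <= Q', LP duality
   provides for each facet A_i x <= b'_i a row u_i with u_i E = A_i,
   u_i F >= 0 and u_i g <= b'_i; if y_j lifts v_j, the slack
   b'_i - A_i v_j = (b'_i - u_i g) + (u_i F) y_j is a nonnegative factorization
   with one more column than the EF has variables y.
   Both duality statements are derived from Farkas' lemma, itself proved by
   Fourier-Motzkin elimination. *)

From HB Require Import structures.
From mathcomp Require Import all_boot all_order all_algebra.
From mathcomp Require Import reals boolp.
From mathcomp Require Import lra zify.
Import Order.TTheory GRing.Theory Num.Theory.
Set Implicit Arguments. Unset Strict Implicit. Unset Printing Implicit Defensive.
Local Open Scope ring_scope.

Section FourierMotzkin.
Variable R : realFieldType.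

Definition ineq_feasible (I : finType) (n : nat) (a : I -> 'I_n -> R) (b : I -> R) :=
  exists x : 'I_n -> R, forall i, \sum_j a i j * x j <= b i.

Definition farkas_certificate (I : finType) (n : nat) (a : I -> 'I_n -> R)
    (b : I -> R) :=
  exists l : I -> R,
    [/\ forall i, 0 <= l i, forall j, \sum_i l i * a i j = 0 & \sum_i l i * b i < 0].

Lemma sum_delta_mul (I : finType) (i0 : I) (f : I -> R) :
  \sum_i (i == i0)%:R * f i = f i0.
Proof.
under eq_bigr do rewrite mulr_natl mulrb.
by rewrite -big_mkcond big_pred1_eq.
Qed.

Lemma exists_between (I : finType) (pl pu : pred I) (lo up : I -> R) :
  (forall i k, pl i -> pu k -> lo i <= up k) ->
  exists x, (forall i, pl i -> lo i <= x) /\ (forall k, pu k -> x <= up k).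
Proof.
move=> lo_up; case: (pickP pl) => [i0 pl_i0|pl0].
  have [i pl_i lo_max] := arg_maxP lo pl_i0.
  by exists (lo i); split=> [j /lo_max | k /(lo_up _ _ pl_i)].
case: (pickP pu) => [k0 pu_k0|pu0].
  have [k pu_k up_min] := arg_minP up pu_k0.
  by exists (up k); split=> [j | j /up_min]; rewrite ?pl0.
by exists 0; split=> i; rewrite ?pl0 ?pu0.
Qed.

(* One elimination step: the variable x_0 is removed by keeping the rows with
   a zero coefficient on x_0 and adding, for each pair of rows with opposite
   signs on x_0, the positive combination that cancels it. *)
Section Elimination.
Variables (I : finType) (n : nat) (a : I -> 'I_n.+1 -> R) (b : I -> R).

Let a0 i := a i ord0.
Let a' i (j : 'I_n) := a i (lift ord0 j).

Definition fm_comb (r : I + I * I) (i' : I) : R :=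
  match r with
  | inl i => if a0 i == 0 then (i' == i)%:R else 0
  | inr (i, k) => if (0 < a0 i) && (a0 k < 0)
                  then - a0 k * (i' == i)%:R + a0 i * (i' == k)%:R else 0
  end.

Definition fm_a r j := \sum_i fm_comb r i * a' i j.
Definition fm_b r := \sum_i fm_comb r i * b i.

Lemma fm_comb_ge0 r i : 0 <= fm_comb r i.
Proof.
case: r => [i'|[i' k]] /=; first by case: ifP => _; rewrite ?ler0n.
case: ifP => // /andP[ai ak].
by rewrite addr_ge0 // mulr_ge0 ?ler0n // ?oppr_ge0 ltW.
Qed.

Lemma sum_fm_comb r (f : I -> R) : \sum_i fm_comb r i * f i =
  match r with
  | inl i => if a0 i == 0 then f i else 0
  | inr (i, k) => if (0 < a0 i) && (a0 k < 0) then - a0 k * f i + a0 i * f k else 0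
  end.
Proof.
case: r => [i|[i k]] /=.
  case: ifP => _; first exact: sum_delta_mul.
  by rewrite big1 // => j _; rewrite mul0r.
case: ifP => _; last by rewrite big1 // => j _; rewrite mul0r.
under eq_bigr do rewrite mulrDl -!mulrA.
by rewrite big_split /= -!mulr_sumr !sum_delta_mul.
Qed.

Lemma sum_fm_comb_a0 r : \sum_i fm_comb r i * a0 i = 0.
Proof.
rewrite sum_fm_comb; case: r => [i|[i k]].
  by case: eqP.
by case: ifP => // _; rewrite mulNr mulrC addNr.
Qed.

Lemma fm_certificate_lift : farkas_certificate fm_a fm_b -> farkas_certificate a b.
Proof.
have sum_comb f l' : \sum_i (\sum_r l' r * fm_comb r i) * f i
                   = \sum_r l' r * \sum_i fm_comb r i * f i.
  under eq_bigr do rewrite mulr_suml.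
  rewrite exchange_big; apply: eq_bigr => r _; rewrite mulr_sumr.
  by apply: eq_bigr => i _; rewrite mulrA.
case=> l' [l'_ge0 l'_a l'_b]; exists (fun i => \sum_r l' r * fm_comb r i); split.
- by move=> i; apply: sumr_ge0 => r _; rewrite mulr_ge0 ?fm_comb_ge0.
- move=> j; rewrite sum_comb; case: (unliftP ord0 j) => [j'|] ->.
    exact: l'_a.
  by rewrite big1 // => r _; rewrite sum_fm_comb_a0 mulr0.
- by rewrite sum_comb.
Qed.

Lemma fm_solution_lift : ineq_feasible fm_a fm_b -> ineq_feasible a b.
Proof.
case=> x' x'_sol; pose s i := \sum_j a' i j * x' j.
have comb_le r : \sum_i fm_comb r i * s i <= \sum_i fm_comb r i * b i.
  suff -> : \sum_i fm_comb r i * s i = \sum_j fm_a r j * x' j by apply: x'_sol.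
  under eq_bigr do rewrite mulr_sumr.
  rewrite exchange_big; apply: eq_bigr => j _; rewrite mulr_suml.
  by apply: eq_bigr => i _; rewrite mulrA.
(* the remaining constraints on x_0 form an interval, nonempty by comb_le *)
have bounds i k : a0 i < 0 -> 0 < a0 k -> (b i - s i) / a0 i <= (b k - s k) / a0 k.
  move=> ai ak; have := comb_le (inr (k, i)); rewrite !sum_fm_comb ak ai /=.
  rewrite ler_pdivlMr // mulrAC ler_ndivrMr //.
  by move=> H; lra.
have [x0 [x0_lo x0_up]] := exists_between bounds.
exists (fun j => if unlift ord0 j is Some j' then x' j' else x0) => i.
rewrite big_ord_recl /= unlift_none.
under eq_bigr do rewrite liftK.
rewrite -/(a0 i) -/(s i).
case: (ltrgt0P (a0 i)) => ai.
- by have := x0_up i ai; rewrite ler_pdivlMr // mulrC lerBrDr.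
- by have := x0_lo i ai; rewrite ler_ndivrMr // mulrC lerBrDr.
- by have := comb_le (inl i); rewrite !sum_fm_comb ai eqxx mul0r add0r.
Qed.

End Elimination.

Lemma fourier_motzkin (n : nat) (I : finType) (a : I -> 'I_n -> R) (b : I -> R) :
  ineq_feasible a b \/ farkas_certificate a b.
Proof.
elim: n I a b => [|n IH] I a b.
  case: (boolP [forall i, 0 <= b i]) => [/forallP b_ge0|/forallPn[i0]].
    by left; exists (fun _ => 0) => i; rewrite big_ord0.
  rewrite -ltNge => bi0; right; exists (fun i => (i == i0)%:R).
  by split=> [i|[]//|]; rewrite ?ler0n ?sum_delta_mul.
case: (IH _ (fm_a a) (fm_b a b)).
  by left; apply: fm_solution_lift.
by right; apply: fm_certificate_lift.
Qed.

End FourierMotzkin.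

Section EntrywiseOrder.
Variable R : realFieldType.

Definition lemx (m n : nat) (A B : 'M[R]_(m, n)) := forall i j, A i j <= B i j.

Lemma lemx_anti (m n : nat) (A B : 'M[R]_(m, n)) : lemx A B -> lemx B A -> A = B.
Proof. by move=> AB BA; apply/matrixP => i j; apply/le_anti; rewrite AB BA. Qed.

Lemma lemxN (m n : nat) (A B : 'M[R]_(m, n)) : lemx (- A) (- B) <-> lemx B A.
Proof. by split=> AB i j; have := AB i j; rewrite !mxE ?lerN2. Qed.

Lemma lemx_col_mx (m1 m2 n : nat) (A1 B1 : 'M[R]_(m1, n)) (A2 B2 : 'M[R]_(m2, n)) :
  lemx (col_mx A1 A2) (col_mx B1 B2) <-> lemx A1 B1 /\ lemx A2 B2.
Proof.
split=> [AB | [AB1 AB2] i j].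
  by split=> i j; [have := AB (lshift m2 i) j | have := AB (rshift m1 i) j];
    rewrite ?col_mxEu ?col_mxEd.
by rewrite -(splitK i); case: (split i) => i'; rewrite ?col_mxEu ?col_mxEd.
Qed.

Lemma lemx_row_mx (m n1 n2 : nat) (A1 B1 : 'M[R]_(m, n1)) (A2 B2 : 'M[R]_(m, n2)) :
  lemx (row_mx A1 A2) (row_mx B1 B2) <-> lemx A1 B1 /\ lemx A2 B2.
Proof.
split=> [AB | [AB1 AB2] i j].
  by split=> i j; [have := AB i (lshift n2 j) | have := AB i (rshift n1 j)];
    rewrite ?row_mxEl ?row_mxEr.
by rewrite -(splitK j); case: (split j) => j'; rewrite ?row_mxEl ?row_mxEr.
Qed.

Lemma lemx_cV (n : nat) (y z : 'cV[R]_n) : lemx y z <-> forall i, y i 0 <= z i 0.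
Proof. by split=> yz i // j; rewrite (ord1 j). Qed.

Lemma lemx_trmx (m n : nat) (A B : 'M[R]_(m, n)) : lemx A^T B^T <-> lemx A B.
Proof. by split=> AB i j; have := AB j i; rewrite !mxE. Qed.

Lemma lemx0 (m n : nat) (A : 'M[R]_(m, n)) : lemx 0 A <-> forall i j, 0 <= A i j.
Proof. by split=> A_ge0 i j; have := A_ge0 i j; rewrite mxE. Qed.

Lemma lemx0_rows (m n : nat) (A : 'M[R]_(m, n)) :
  (forall i, lemx 0 (row i A)) -> lemx 0 A.
Proof. by move=> A_ge0 i j; have := A_ge0 i 0 j; rewrite !mxE. Qed.

Lemma nonneg_cV (n : nat) (y : 'cV[R]_n) : lemx 0 y <-> forall i, 0 <= y i 0.
Proof. by rewrite lemx0; split=> y_ge0 i // j; rewrite (ord1 j). Qed.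

Lemma mulmx_ge0 (m n p : nat) (A : 'M[R]_(m, n)) (B : 'M[R]_(n, p)) :
  lemx 0 A -> lemx 0 B -> lemx 0 (A *m B).
Proof.
move=> A_ge0 B_ge0 i j; rewrite !mxE sumr_ge0 // => l _.
by apply: mulr_ge0; [have := A_ge0 i l | have := B_ge0 l j]; rewrite mxE.
Qed.

End EntrywiseOrder.

Section Farkas.
Variable R : realFieldType.

Lemma row_mx_split (m n1 n2 : nat) (A : 'M[R]_(m, n1 + n2)) :
  exists A1 A2, A = row_mx A1 A2.
Proof. by exists (lsubmx A), (rsubmx A); rewrite hsubmxK. Qed.

Lemma farkas_mx (m n : nat) (M : 'M[R]_(m, n)) (b : 'cV[R]_m) :
  (exists x : 'cV[R]_n, lemx (M *m x) b) \/
  (exists l : 'rV[R]_m, [/\ lemx 0 l, l *m M = 0 & (l *m b) 0 0 < 0]).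
Proof.
case: (fourier_motzkin (fun i j => M i j) (fun i => b i 0)) => [[x x_sol]|].
  left; exists (\col_j x j); apply/lemx_cV => i; rewrite mxE.
  by under eq_bigr do rewrite mxE.
case=> l [l_ge0 lM lb]; right; exists (\row_i l i); split.
- by move=> i j; rewrite !mxE.
- by apply/matrixP => i j; rewrite !mxE -[RHS](lM j); apply: eq_bigr => p _; rewrite mxE.
- by rewrite mxE; under eq_bigr do rewrite mxE.
Qed.

Lemma farkas_nonneg_eq (k r : nat) (F : 'M[R]_(k, r)) (c : 'cV[R]_k) :
  (exists y : 'cV[R]_r, lemx 0 y /\ F *m y = c) \/
  (exists u : 'rV[R]_k, lemx 0 (u *m F) /\ (u *m c) 0 0 < 0).
Proof.
case: (farkas_mx (col_mx (- 1%:M) (col_mx F (- F))) (col_mx 0 (col_mx c (- c)))).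
  case=> y; rewrite !mul_col_mx mulNmx mul1mx mulNmx.
  case/lemx_col_mx => y_ge0 /lemx_col_mx[Fy_le /lemxN c_le].
  left; exists y; split; last exact: lemx_anti.
  by apply/lemxN; rewrite oppr0.
case=> l; have [l1 [l23 ->]] := row_mx_split l; have [l2 [l3 ->]] := row_mx_split l23.
rewrite -!row_mx0 => -[/lemx_row_mx[l1_ge0 /lemx_row_mx _] + lb].
rewrite !mul_row_col mulmxN mulmx1 !mulmxN => /eqP.
rewrite addrC subr_eq0 => /eqP l1E.
right; exists (l2 - l3); split; first by rewrite mulmxBl l1E.
by move: lb; rewrite !mul_row_col mulmx0 add0r mulmxN mulmxBl.
Qed.

End Farkas.

Lemma exists_least (P : nat -> Prop) :
  (exists n, P n) -> exists n, P n /\ forall m, P m -> (n <= m)%N.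
Proof.
move=> exP; have exPb : exists n, `[< P n >] by case: exP => n Pn; exists n; apply/asboolP.
by case: (ex_minnP exPb) => n /asboolP Pn n_min; exists n; split=> // k /asboolP /n_min.
Qed.

Lemma trmx11 (T : Type) (A : 'M[T]_1) : A^T = A.
Proof. by apply/matrixP => i j; rewrite !ord1 mxE. Qed.

Lemma col_mulmx (R : pzSemiRingType) (m n p : nat) (j : 'I_p) (A : 'M[R]_(m, n)) B :
  col j (A *m B) = A *m col j B.
Proof. by rewrite !colE mulmxA. Qed.

Lemma col_matrixP (T : Type) (m n : nat) (A B : 'M[T]_(m, n)) :
  (forall j, col j A = col j B) -> A = B.
Proof. by move=> AB; apply: trmx_inj; apply/row_matrixP => j; rewrite -!tr_col AB. Qed.

Section DotProduct.
Variables (R : realType) (d : nat).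

Lemma dotE (w x : 'cV[R]_d) : dot w x = (w^T *m x) 0 0.
Proof. by rewrite /dot mxE; apply: eq_bigr => i _; rewrite mxE. Qed.

Lemma dotZr (w x : 'cV[R]_d) (c : R) : dot w (c *: x) = c * dot w x.
Proof. by rewrite /dot mulr_sumr; apply: eq_bigr => i _; rewrite mxE mulrCA. Qed.

Lemma dotNl (w x : 'cV[R]_d) : dot (- w) x = - dot w x.
Proof. by rewrite /dot -sumrN; apply: eq_bigr => i _; rewrite mxE mulNr. Qed.

End DotProduct.

Section ExtendedFormulation.
Variables (R : realType) (d k r : nat).
Variables (E : 'M[R]_(k, d)) (F : 'M[R]_(k, r)) (g : 'cV[R]_k).

Lemma EFproj_conv_pts (n : nat) (V : 'I_n -> 'cV[R]_d) z :
  (forall j, EFproj E F g (V j)) -> conv_pts V z -> EFproj E F g z.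
Proof.
move=> V_in [n' [v [l [v_V l_ge0 l_sum1 ->]]]].
have [y vy] : exists y : 'I_n' -> 'cV[R]_r,
    forall i, (forall p, 0 <= y i p 0) /\ E *m v i + F *m y i = g.
  apply: (@fin_all_exists _ (fun=> 'cV[R]_r)
            (fun i y => (forall p, 0 <= y p 0) /\ E *m v i + F *m y = g)) => i.
  by have [j ->] := v_V i; apply: V_in.
exists (\sum_i l i *: y i); split.
  move=> p; rewrite summxE sumr_ge0 // => i _; rewrite mxE mulr_ge0 //.
  by case: (vy i).
rewrite !mulmx_sumr -big_split /= -[g]scale1r -l_sum1 scaler_suml.
apply: eq_bigr => i _; rewrite -!scalemxAr -scalerDr.
by case: (vy i) => _ ->.
Qed.

(* For t > 0 this is a convex combination of x0 and the point xv / t of K; for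
   t = 0 it is a step from x0 along the recession direction xv. *)
Lemma EFproj_homog_comb x0 xv (yv : 'cV[R]_r) (t s : R) :
  EFproj E F g x0 -> (forall l, 0 <= yv l 0) -> 0 <= t ->
  E *m xv + F *m yv = t *: g -> 0 <= s ->
  EFproj E F g ((1 + s * t)^-1 *: (x0 + s *: xv)).
Proof.
move=> [y0 [y0_ge0 x0y0]] yv_ge0 t_ge0 xvyv s_ge0.
have D_gt0 : 0 < 1 + s * t by rewrite ltr_pwDl // mulr_ge0.
exists ((1 + s * t)^-1 *: (y0 + s *: yv)); split.
  move=> l; rewrite !mxE; apply: mulr_ge0; first by rewrite invr_ge0 ltW.
  by rewrite addr_ge0 ?mulr_ge0.
rewrite -!scalemxAr -scalerDr !mulmxDr -!scalemxAr addrACA x0y0 -scalerDr xvyv scalerA.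
by rewrite -{1}(scale1r g) -scalerDl scalerA mulVf ?scale1r // gt_eqF.
Qed.

Lemma EFproj_valid_homog (a : 'rV[R]_d) (c : R) x0 xv (yv : 'cV[R]_r) (t : R) :
  (forall x, EFproj E F g x -> (a *m x) 0 0 <= c) ->
  EFproj E F g x0 -> (forall l, 0 <= yv l 0) -> 0 <= t ->
  E *m xv + F *m yv = t *: g -> (a *m xv) 0 0 <= t * c.
Proof.
move=> valid x0_in yv_ge0 t_ge0 xvyv; rewrite leNgt; apply/negP => gap.
have ax0 := valid _ x0_in.
pose s := (c - (a *m x0) 0 0 + 1) / ((a *m xv) 0 0 - t * c).
have s_ge0 : 0 <= s by rewrite divr_ge0 ?subr_ge0 ?ltW //; lra.
have s_gap : s * ((a *m xv) 0 0 - t * c) = c - (a *m x0) 0 0 + 1.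
  by rewrite mulfVK // subr_eq0 gt_eqF.
have := valid _ (EFproj_homog_comb x0_in yv_ge0 t_ge0 xvyv s_ge0).
have -> : forall u : 'cV[R]_d, (a *m ((1 + s * t)^-1 *: u)) 0 0 = (a *m u) 0 0 / (1 + s * t).
  by move=> u; rewrite -scalemxAr mxE mulrC.
rewrite ler_pdivrMr ?(ltr_pwDl ltr01 (mulr_ge0 s_ge0 t_ge0)) //.
rewrite mulmxDr -scalemxAr mxE [X in _ + X]mxE.
lra.
Qed.

Lemma EFproj_valid_ineq (a : 'rV[R]_d) (c : R) x0 :
  EFproj E F g x0 -> (forall x, EFproj E F g x -> (a *m x) 0 0 <= c) ->
  exists u : 'rV[R]_k, [/\ u *m E = a, lemx 0 (u *m F) & (u *m g) 0 0 <= c].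
Proof.
move=> x0_in valid.
case: (farkas_mx (col_mx (col_mx E^T (- E^T)) (col_mx (- F^T) g^T))
                 (col_mx (col_mx a^T (- a^T)) (col_mx 0 c%:M))).
  case=> x; rewrite !mul_col_mx !mulNmx.
  case/lemx_col_mx => /lemx_col_mx[Ex_le /lemxN Ex_ge] /lemx_col_mx[/lemxN Fx_ge gx_le].
  exists x^T; split.
  - by apply: trmx_inj; rewrite trmx_mul trmxK; apply: lemx_anti.
  - by move: Fx_ge; rewrite oppr0 opprK => /lemx_trmx; rewrite trmx0 trmx_mul trmxK.
  - by rewrite -[x^T *m g]trmx11 trmx_mul trmxK; have := gx_le 0 0; rewrite [c%:M 0 0]mxE.
case=> l; have [l12 [l34 ->]] := row_mx_split l.
have [l1 [l2 ->]] := row_mx_split l12; have [l3 [l4 ->]] := row_mx_split l34.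
rewrite -!row_mx0 => -[/lemx_row_mx[/lemx_row_mx[_ _] /lemx_row_mx[l3_ge0 l4_ge0]]].
rewrite !mul_row_col !mulmxN mulmx0 add0r => /eqP; rewrite addrA addrAC subr_eq0 => /eqP lM lb.
(* The certificate is a point of the homogenization of K violating the
   homogenized inequality. *)
pose xv := (l2 - l1)^T.
have xvyv : E *m xv + F *m l3^T = l4 0 0 *: g.
  apply: trmx_inj; rewrite linearD linearZ /= !trmx_mul !trmxK mulmxBl.
  by rewrite -mul_scalar_mx -mx11_scalar -lM -opprB addKr.
have yv_ge0 : forall p, 0 <= l3^T p 0 by move=> p; have := l3_ge0 0 p; rewrite !mxE.
have t_ge0 : 0 <= l4 0 0 by have := l4_ge0 0 0; rewrite mxE.
have := EFproj_valid_homog valid x0_in yv_ge0 t_ge0 xvyv.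
rewrite -[a *m xv]trmx11 trmx_mul trmxK.
move: lb; rewrite -mulmxBl -opprB mulNmx mul_mx_scalar !mxE.
lra.
Qed.

Lemma EFproj_of_unseparated z :
  (forall w, exists x, EFproj E F g x /\ dot w z <= dot w x) -> EFproj E F g z.
Proof.
move=> unsep.
case: (farkas_nonneg_eq F (g - E *m z)) => [[y [/nonneg_cV y_ge0 Fy]]|[u [uF_ge0 u_neg]]].
  by exists y; split => //; rewrite Fy addrC subrK.
have [x [[y [/nonneg_cV y_ge0 xy]] le_zx]] := unsep (u *m E)^T.
have := mulmx_ge0 uF_ge0 y_ge0 0 0; move: le_zx u_neg.
rewrite !dotE trmxK -!mulmxA (canRL (addrK _) xy) !mulmxBr mulmxA.
move: (u *m g) (u *m (E *m z)) (u *m F *m y) => P S Q; rewrite !mxE.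
lra.
Qed.

End ExtendedFormulation.

Section SlackMatrix.
Variables (R : realType) (d m n : nat).
Variables (A : 'M[R]_(m, d)) (b : 'cV[R]_m) (V : 'I_n -> 'cV[R]_d).

Lemma conv_pts_vertex j : conv_pts V (V j).
Proof.
exists 1%N, (fun=> V j), (fun=> 1).
by split=> [_|_||]; rewrite ?big_ord1 ?scale1r ?ler01 //; exists j.
Qed.

Lemma col_slack j : col j (slack A b V) = b - A *m V j.
Proof. by apply/matrixP => i k; rewrite (ord1 k) !mxE. Qed.

Definition EF_between (k r : nat) (E : 'M[R]_(k, d)) (F : 'M[R]_(k, r)) (g : 'cV[R]_k) :=
  (forall j, EFproj E F g (V j)) /\ (forall x, EFproj E F g x -> polyhedron A b x).

Lemma EF_betweenP (Ps : 'cV[R]_d -> Prop) (k r : nat) E F (g : 'cV[R]_k) :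
  (forall x, Ps x <-> conv_pts V x) ->
  ((forall z, Ps z -> EFproj E F g z) /\ (forall x, EFproj E F g x -> polyhedron A b x))
    <-> @EF_between k r E F g.
Proof.
move=> PsV; split=> -[PK KQ]; split=> //.
  by move=> j; apply/PK/PsV/conv_pts_vertex.
by move=> z /PsV; apply: EFproj_conv_pts.
Qed.

Lemma EF_between_of_nn_factor (r : nat) :
  nn_factor (slack A b V) r -> exists T : 'M[R]_(m, r), EF_between A T b.
Proof.
case=> T [U [T_ge0 U_ge0 STU]]; exists T; split.
  move=> j; exists (col j U); split; first by move=> l; rewrite mxE.
  by rewrite -col_mulmx -STU col_slack addrC subrK.
move=> x [y [y_ge0 xy]] i.
rewrite (canRL (addrK _) xy) mxE [X in _ + X]mxE gerDl oppr_le0.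
by have /lemx0 := mulmx_ge0 (proj2 (lemx0 T) T_ge0) (proj2 (nonneg_cV y) y_ge0).
Qed.

(* Each facet inequality is implied by the EF (by LP duality), say with
   multipliers U; then b - A V_j = (b - U g) + (U F) y_j, a factorization with
   one extra column. *)
Lemma nn_factor_of_EF_between (k r : nat) E F (g : 'cV[R]_k) :
  @EF_between k r E F g -> nn_factor (slack A b V) r.+1.
Proof.
case=> V_in K_sub.
have [n0|n_gt0] := posnP n.
  exists 0, 0; split=> [i j|i j|]; rewrite ?mxE //.
  by apply/matrixP => i [j lt_jn]; exfalso; rewrite n0 in lt_jn.
have facet i : exists u : 'rV[R]_k,
    [/\ u *m E = row i A, lemx 0 (u *m F) & (u *m g) 0 0 <= b i 0].
  apply: (EFproj_valid_ineq (V_in (Ordinal n_gt0))) => x /K_sub x_sub.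
  by rewrite -row_mul mxE.
have [u u_facet] := @fin_all_exists _ (fun=> 'rV[R]_k) _ facet.
have [y y_vertex] := @fin_all_exists _ (fun=> 'cV[R]_r) _ V_in.
pose U := \matrix_i u i.
pose Y := \matrix_(l, j) y j l 0.
have UE : U *m E = A.
  by apply/row_matrixP => i; rewrite row_mul rowK; case: (u_facet i).
have UF_ge0 : lemx 0 (U *m F).
  by apply: lemx0_rows => i; rewrite row_mul rowK; case: (u_facet i).
have Ug_le i : (U *m g) i 0 <= b i 0.
  by case: (u_facet i) => _ _; rewrite -(rowK u i) -row_mul [X in X <= _]mxE.
exists (row_mx (b - U *m g) (U *m F)), (col_mx (const_mx 1 : 'M_(1, n)) Y); split.
- apply/lemx0; rewrite -(@row_mx0 _ m 1 r); apply/(@lemx_row_mx _ m 1 r); split=> //.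
  by apply/nonneg_cV => i; rewrite mxE [X in _ + X]mxE subr_ge0.
- apply/lemx0; rewrite -(@col_mx0 _ 1 r n); apply/(@lemx_col_mx _ 1 r n).
  split=> [? ?|l j]; rewrite !mxE ?ler01 //.
  by case: (y_vertex j).
- apply: col_matrixP => j; case: (y_vertex j) => _ /(canRL (addrK _)) EVj.
  rewrite col_mulmx (@col_col_mx _ 1 r n) (@mul_row_col _ m 1 r 1) col_slack.
  have -> : col j (const_mx 1 : 'M_(1, n)) = 1%:M :> 'M[R]_1
    by apply/matrixP => ? ?; rewrite !ord1 !mxE.
  have -> : col j Y = y j by apply/matrixP => l o; rewrite (ord1 o) !mxE.
  by rewrite mulmx1 -UE -mulmxA EVj mulmxBr mulmxA opprB addrA addrAC.
Qed.

Lemma nn_factor_id : (forall j, polyhedron A b (V j)) -> nn_factor (slack A b V) n.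
Proof.
move=> V_sub; exists (slack A b V), 1%:M; split=> [i j|i j|]; last by rewrite mulmx1.
  by rewrite mxE subr_ge0 V_sub.
by rewrite mxE ler0n.
Qed.

Lemma EF_size_nnrank_gap
    (approx : forall k r, 'M[R]_(k, d) -> 'M[R]_(k, r) -> 'cV[R]_k -> Prop) :
  (forall j, polyhedron A b (V j)) ->
  (forall k r E F g, approx k r E F g <-> @EF_between k r E F g) ->
  exists rp r, [/\ is_nnrank (slack A b V) rp,
    (exists k E F g, approx k r E F g) /\
    (forall k r' E F g, approx k r' E F g -> (r <= r')%N)
  & r = rp \/ r.+1 = rp].
Proof.
move=> V_sub approxE.
have [rp [rp_fact rp_min]] := exists_least (ex_intro _ _ (nn_factor_id V_sub)).
have [T T_EF] := EF_between_of_nn_factor rp_fact.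
have [r [[k [E [F [g EFg]]]] r_min]] : exists r,
    (exists k E F g, approx k r E F g) /\
    forall r', (exists k E F g, approx k r' E F g) -> (r <= r')%N.
  by apply: exists_least; exists rp, m, A, T, b; apply/approxE.
have r_le_rp : (r <= rp)%N by apply: r_min; exists m, A, T, b; apply/approxE.
have rp_le_r1 : (rp <= r.+1)%N by apply/rp_min/nn_factor_of_EF_between/approxE/EFg.
exists rp, r; split=> //; last lia.
by split=> [|k' r' E' F' g' approx_r']; [exists k, E, F, g | apply: r_min; exists k', E', F', g'].
Qed.

End SlackMatrix.

Section ApproximateEF.
Variables (R : realType) (d : nat) (L : seq bool -> Prop) (O : seq R -> Prop) (rho : R).
Hypothesis rho_gt0 : 0 < rho.

Lemma polyhedronZ (m : nat) (A : 'M[R]_(m, d)) (b : 'cV[R]_m) (c : R) x :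
  0 < c -> polyhedron A (c *: b) x <-> polyhedron A b (c^-1 *: x).
Proof.
by move=> c_gt0; split=> Ax i; have := Ax i; rewrite -scalemxAr !mxE ler_pdivrMl.
Qed.

Lemma approxEF_maxP (m : nat) (A : 'M[R]_(m, d)) (b : 'cV[R]_m) (k r : nat) E F g :
  (forall x, Qmax L O x <-> polyhedron A b x) ->
  @approxEF_max R d L O rho k r E F g <->
  (forall z, Pset L z -> EFproj E F g z) /\
  (forall x, EFproj E F g x -> polyhedron A (rho *: b) x).
Proof.
move=> QA.
have rhoQ x : polyhedron A (rho *: b) x <->
    forall w, inO O w -> exists z, Pset L z /\ dot w x <= rho * dot w z.
  rewrite polyhedronZ // -QA.
  by split=> Qx w /Qx [z [Pz le]]; exists z; split=> //; move: le; rewrite dotZr ler_pdivrMl.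
split=> -[PK KQ]; split.
- by move=> z Pz; apply: EFproj_of_unseparated => w; apply: PK.
- by move=> x /KQ Kx; apply/rhoQ.
- by move=> w z Pz; exists z; split=> //; apply: PK.
- by move=> w Ow x /KQ /rhoQ; apply.
Qed.

Lemma approxEF_minP (m : nat) (A : 'M[R]_(m, d)) (b : 'cV[R]_m) (k r : nat) E F g :
  (forall x, Qmin L O x <-> polyhedron A b x) ->
  @approxEF_min R d L O rho k r E F g <->
  (forall z, Pset L z -> EFproj E F g z) /\
  (forall x, EFproj E F g x -> polyhedron A (rho^-1 *: b) x).
Proof.
move=> QA.
have rhoQ x : polyhedron A (rho^-1 *: b) x <->
    forall w, inO O w -> exists z, Pset L z /\ rho^-1 * dot w z <= dot w x.
  rewrite polyhedronZ ?invr_gt0 // invrK -QA.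
  by split=> Qx w /Qx [z [Pz le]]; exists z; split=> //; move: le; rewrite dotZr ler_pdivrMl.
split=> -[PK KQ]; split.
- move=> z Pz; apply: EFproj_of_unseparated => w.
  by have [x [Kx le]] := PK (- w) z Pz; exists x; rewrite !dotNl lerN2 in le.
- by move=> x /KQ Kx; apply/rhoQ.
- by move=> w z Pz; exists z; split=> //; apply: PK.
- by move=> w Ow x /KQ /rhoQ; apply.
Qed.

End ApproximateEF.

Theorem theorem2 (R : realType) (L : seq bool -> Prop) (O : seq R -> Prop)
  (d : nat) (rho : R) :
  1 <= rho ->
  (forall (m : nat) (A : 'M[R]_(m, d)) (b : 'cV[R]_m)
          (n : nat) (V : 'I_n -> 'cV[R]_d),
     (forall x, Qmax L O x <-> polyhedron A b x) ->
     (forall x, Pset L x <-> conv_pts V x) ->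
     (forall x, Pset L x -> polyhedron A (rho *: b) x) ->
     exists (rp r : nat),
       [/\ is_nnrank (slack A (rho *: b) V) rp,
           min_EF_size_max d L O rho r
         & r = rp \/ r.+1 = rp]) /\
  (forall (m : nat) (A : 'M[R]_(m, d)) (b : 'cV[R]_m)
          (n : nat) (V : 'I_n -> 'cV[R]_d),
     (forall x, Qmin L O x <-> polyhedron A b x) ->
     (forall x, Pset L x <-> conv_pts V x) ->
     (forall x, Pset L x -> polyhedron A (rho^-1 *: b) x) ->
     exists (rp r : nat),
       [/\ is_nnrank (slack A (rho^-1 *: b) V) rp,
           min_EF_size_min d L O rho r
         & r = rp \/ r.+1 = rp]).
Proof.
move=> rho_ge1; have rho_gt0 : 0 < rho := lt_le_trans ltr01 rho_ge1.
split=> m A b n V QA PV P_sub.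
- apply: (EF_size_nnrank_gap (approx := fun k r E F g => approxEF_max L O rho E F g)).
    by move=> j; apply/P_sub/PV/conv_pts_vertex.
  move=> k r E F g; rewrite approxEF_maxP //.
  exact: EF_betweenP.
- apply: (EF_size_nnrank_gap (approx := fun k r E F g => approxEF_min L O rho E F g)).
    by move=> j; apply/P_sub/PV/conv_pts_vertex.
  move=> k r E F g; rewrite approxEF_minP //.
  exact: EF_betweenP.
Qed.
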